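(* Let $T$ be a tournament and let $X,M\subseteq V(T)$ be such that $X$ dominates $T$. Then $T$ is $M$-sparse if and only if $T[X]$ is $(M\cap X)$-sparse and $T-X$ is $(M\setminus X)$-sparse.
   Context: A tournament is a digraph with exactly one arc between each pair of distinct vertices; $T[X]$ is the subtournament induced by $X$ and $T-X$ the one induced by $V(T)\setminus X$. $X$ dominates $T$ if $(x,y)\in A(T)$ for every $x\in X$ and every $y\in V(T)\setminus X$. For an ordering $\sigma$ of the vertices of a tournament, an arc $(x,y)$ is backward if $y$ precedes $x$, and $d_\sigma(v)$ is the number of backward arcs incident to $v$. For a tournament $S$ and $N\subseteq V(S)$, $S$ is $N$-sparse if there is an ordering $\sigma$ of $V(S)$ with $d_\sigma(v)\le1$ for all $v\in V(S)$ and $d_\sigma(v)=0$ for all $v\in N$. *)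

From mathcomp Require Import all_boot.
Set Implicit Arguments. Unset Strict Implicit. Unset Printing Implicit Defensive.

Definition tournament (T : finType) (arc : rel T) : Prop :=
  (forall x, ~~ arc x x) /\
  (forall x y, x != y -> arc x y (+) arc y x).

Definition dominates (T : finType) (arc : rel T) (X : {set T}) : Prop :=
  forall x y, x \in X -> y \notin X -> arc x y.

Definition ordering_of (T : finType) (S : {set T}) (s : seq T) : Prop :=
  uniq s /\ s =i S.

Definition backward (T : finType) (arc : rel T) (s : seq T) (x y : T) : bool :=
  arc x y && (index y s < index x s).

Definition dback (T : finType) (arc : rel T) (S : {set T}) (s : seq T) (v : T) : nat :=
  #|[set u in S | backward arc s v u || backward arc s u v]|.

Definition sparse (T : finType) (arc : rel T) (S N : {set T}) : Prop :=
  exists s : seq T, ordering_of S s /\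
    (forall v, v \in S -> dback arc S s v <= 1) /\
    (forall v, v \in N -> dback arc S s v = 0).

From mathcomp Require Import all_boot.
Set Implicit Arguments. Unset Strict Implicit. Unset Printing Implicit Defensive.

(* Restricting a good ordering of a vertex set to a subset only deletes
   backward arcs, so sparsity passes to subtournaments.  Conversely, when X
   dominates T no arc goes from V(T) \ X back into X, so placing a good
   ordering of T[X] before a good ordering of T - X creates no new backward
   arc, and every vertex keeps the backward degree it had in its part. *)

Lemma index_filter_lt (T : eqType) (p : pred T) (s : seq T) x y :
  p x -> p y -> x \in s -> y \in s ->
  (index x (filter p s) < index y (filter p s)) = (index x s < index y s).
Proof.
move=> px py; elim: s => [//|a s IHs] /=; rewrite !inE.
have [<- _ _ | ax] := eqVneq x a; first by rewrite px /= eqxx; case: (x == y).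
have [<- _ _ | ay /= xs ys] := eqVneq y a; first by rewrite py /= eqxx !ltn0.
rewrite ltnS -IHs //.
by case: (p a) => //=; rewrite !(eq_sym a) (negbTE ax) (negbTE ay).
Qed.

Lemma backward_filter (T : finType) (arc : rel T) (p : pred T) s x y :
  p x -> p y -> x \in s -> y \in s ->
  backward arc (filter p s) x y = backward arc s x y.
Proof. by move=> px py xs ys; rewrite /backward index_filter_lt. Qed.

Lemma sparse_sub (T : finType) (arc : rel T) (S S' N : {set T}) :
  S' \subset S -> sparse arc S N -> sparse arc S' (N :&: S').
Proof.
move=> /subsetP sS'S [s [[uniq_s mem_s] [dback_le1 dback_N]]].
have mem_S' v : v \in S' -> v \in s by move=> vS'; rewrite mem_s sS'S.
have dback_filter v : v \in S' ->
    dback arc S' (filter (mem S') s) v <= dback arc S s v.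
  move=> vS'; apply/subset_leq_card/subsetP => u; rewrite !inE.
  case/andP=> uS' back_uv; rewrite sS'S //=.
  by rewrite !backward_filter ?mem_S' in back_uv.
exists (filter (mem S') s); split; [split | split].
- exact: filter_uniq.
- by move=> v; rewrite mem_filter mem_s andb_idr // => /sS'S.
- by move=> v vS'; rewrite (leq_trans (dback_filter v vS')) ?dback_le1 ?sS'S.
- move=> v /setIP [vN vS']; apply/eqP; rewrite -leqn0 -(dback_N v vN).
  exact: dback_filter.
Qed.

Section Concatenation.

Variables (T : finType) (arc : rel T) (A B : {set T}).
Hypothesis disjoint_AB : [disjoint A & B].
Hypothesis no_arc_BA : forall a b, a \in A -> b \in B -> ~~ arc b a.

Section Orderings.

Context {sA sB : seq T}.
Hypotheses (ord_A : ordering_of A sA) (ord_B : ordering_of B sB).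

Lemma index_cat_l a : a \in A -> index a (sA ++ sB) = index a sA.
Proof. by move=> aA; rewrite index_cat ord_A.2 aA. Qed.

Lemma index_cat_r b : b \in B -> index b (sA ++ sB) = size sA + index b sB.
Proof. by move=> bB; rewrite index_cat ord_A.2 (disjointFl disjoint_AB bB). Qed.

Lemma index_cat_lr a b : a \in A -> b \in B ->
  index a (sA ++ sB) < index b (sA ++ sB).
Proof.
move=> aA bB; rewrite index_cat_l // index_cat_r //.
by rewrite ltn_addr // index_mem ord_A.2.
Qed.

Lemma backward_cat_lr a b : a \in A -> b \in B ->
  backward arc (sA ++ sB) a b = false.
Proof. by move=> aA bB; rewrite /backward ltnNge ltnW ?index_cat_lr ?andbF. Qed.

Lemma backward_cat_rl a b : a \in A -> b \in B ->
  backward arc (sA ++ sB) b a = false.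
Proof. by move=> aA bB; rewrite /backward (negbTE (no_arc_BA aA bB)). Qed.

Lemma dback_cat_l v : v \in A ->
  dback arc (A :|: B) (sA ++ sB) v = dback arc A sA v.
Proof.
move=> vA; apply: eq_card => u; rewrite !inE.
have [uA | uNA] := boolP (u \in A); first by rewrite /backward !index_cat_l.
case: (boolP (u \in B)) => //= uB.
by rewrite (backward_cat_lr vA uB) (backward_cat_rl vA uB).
Qed.

Lemma dback_cat_r v : v \in B ->
  dback arc (A :|: B) (sA ++ sB) v = dback arc B sB v.
Proof.
move=> vB; apply: eq_card => u; rewrite !inE.
have [uB | uNB] := boolP (u \in B).
  by rewrite orbT /backward !index_cat_r // !ltn_add2l.
case: (boolP (u \in A)) => //= uA.
by rewrite (backward_cat_rl uA vB) (backward_cat_lr uA vB).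
Qed.

Lemma ordering_cat : ordering_of (A :|: B) (sA ++ sB).
Proof.
split=> [|v]; last by rewrite mem_cat ord_A.2 ord_B.2 inE.
rewrite cat_uniq ord_A.1 ord_B.1 andbT; apply/hasPn => b.
by rewrite ord_B.2 ord_A.2 => /(disjointFl disjoint_AB) ->.
Qed.

End Orderings.

Lemma sparse_cat N :
  sparse arc A (N :&: A) -> sparse arc B (N :&: B) ->
  sparse arc (A :|: B) (N :&: (A :|: B)).
Proof.
case=> [sA [ord_A [le1_A zero_A]]] [sB [ord_B [le1_B zero_B]]].
exists (sA ++ sB); split; first exact: ordering_cat.
split=> v.
- case/setUP=> [vA | vB].
  + by rewrite (dback_cat_l ord_A vA) le1_A.
  + by rewrite (dback_cat_r ord_A vB) le1_B.
- case/setIP=> vN /setUP [vA | vB].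
  + by rewrite (dback_cat_l ord_A vA) zero_A // inE vN.
  + by rewrite (dback_cat_r ord_A vB) zero_B // inE vN.
Qed.

End Concatenation.

Lemma dominates_no_arc_in (T : finType) (arc : rel T) (X : {set T}) :
  tournament arc -> dominates arc X ->
  forall x y, x \in X -> y \in ~: X -> ~~ arc y x.
Proof.
move=> [_ tour] domX x y xX; rewrite inE => yNX.
have xy : x != y by apply: contraNneq yNX => <-.
by move: (tour x y xy); rewrite domX.
Qed.

Theorem mainTheorem13 (T : finType) (arc : rel T) (X M : {set T}) :
  tournament arc -> dominates arc X ->
  sparse arc [set: T] M <->
  (sparse arc X (M :&: X) /\ sparse arc (~: X) (M :\: X)).
Proof.
move=> tour domX; rewrite setDE; split.
  by move=> sparseT; split; apply: sparse_sub (subsetT _) sparseT.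
case=> sparseX sparseNX.
have disjX : [disjoint X & ~: X] by rewrite disjoints_subset setCK.
have := sparse_cat disjX (dominates_no_arc_in tour domX) sparseX sparseNX.
by rewrite setUCr setIT.
Qed.
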